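(* Let $\mathcal{H}_A,\mathcal{H}_B$ be finite-dimensional Hilbert spaces with fixed reference bases and the product basis on $\mathcal{H}_A\otimes\mathcal{H}_B$. For every state $\rho_{AB}$ with reduced state $\rho_B$, $$C_f(\rho_{AB})\geq C^{A|B}_f(\rho_{AB})+C_f(\rho_B).$$
   Context: $S$ is the von Neumann entropy; for a system with reference basis, $\Delta$ denotes complete dephasing in that basis, and $\Delta_A=\Delta\otimes\mathrm{id}_B$ dephases only $A$. $C_f(\rho)=\min\sum_ip_iS(\Delta(|\psi_i\rangle\langle\psi_i|))$ over pure-state decompositions $\rho=\sum_ip_i|\psi_i\rangle\langle\psi_i|$ (product basis for $\rho_{AB}$). $C^{A|B}_f(\rho_{AB})=\min\sum_ip_iS(\Delta_A(|\psi_i\rangle\langle\psi_i|_{AB}))$ over pure-state decompositions of $\rho_{AB}$. *)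

From HB Require Import structures.
From mathcomp Require Import all_boot all_order all_algebra.
From mathcomp Require Import complex.
From mathcomp Require Import all_classical all_reals all_analysis.
Set Implicit Arguments. Unset Strict Implicit. Unset Printing Implicit Defensive.
Import Order.TTheory GRing.Theory Num.Theory.
Local Open Scope ring_scope.

Section QDefs.
Variable R : realType.
Local Notation C := R[i].

Definition adjmx m n (A : 'M[C]_(m, n)) : 'M[C]_(n, m) := (map_mx (@conjc R) A)^T.

Definition is_state d (rho : 'M[C]_d) : Prop :=
  [/\ adjmx rho = rho,
      (forall v : 'cV[C]_d, 0 <= (adjmx v *m rho *m v) 0 0)
    & \tr rho = 1].

(* the eigenvalues (with multiplicity) of a square complex matrix: the roots of
   its characteristic polynomial, which splits over the algebraically closed C *)
Definition spectrum d (A : 'M[C]_d) : seq C :=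
  xget [::] [set s : seq C | char_poly A = \prod_(r <- s) ('X - r%:P)].

(* von Neumann entropy S(A) = - sum_lambda lambda ln lambda (natural log,
   with 0 ln 0 = 0); eigenvalues of a state are real, we take real parts *)
Definition vN_entropy d (A : 'M[C]_d) : R :=
  \sum_(r <- spectrum A) - (complex.Re r * ln (complex.Re r)).

Definition dephase d (A : 'M[C]_d) : 'M[C]_d := diag_mx (\row_k A k k).

(* product basis of H_A (x) H_B: index (i,j) |-> mxvec_index i j *)
Definition idx_pair m n (k : 'I_(m * n)) : 'I_m * 'I_n :=
  enum_val (cast_ord (esym (mxvec_cast m n)) k).

Definition dephaseA m n (A : 'M[C]_(m * n)) : 'M[C]_(m * n) :=
  \matrix_(k, l) (if (idx_pair k).1 == (idx_pair l).1 then A k l else 0).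

Definition ptraceA m n (A : 'M[C]_(m * n)) : 'M[C]_n :=
  \matrix_(j, j') \sum_(i < m) A (mxvec_index i j) (mxvec_index i j').

Definition proj d (psi : 'cV[C]_d) : 'M[C]_d := psi *m adjmx psi.

Definition pure_decomp d (rho : 'M[C]_d) k (p : 'I_k -> R) (psi : 'I_k -> 'cV[C]_d) : Prop :=
  [/\ forall i, 0 <= p i,
      \sum_i p i = 1,
      forall i, adjmx (psi i) *m psi i = 1
    & rho = \sum_i (real_complex R (p i)) *: proj (psi i)].

Definition convex_roof d (f : 'cV[C]_d -> R) (rho : 'M[C]_d) : R :=
  inf [set x : R | exists k (p : 'I_k -> R) (psi : 'I_k -> 'cV[C]_d),
                     pure_decomp rho p psi /\ x = \sum_i p i * f (psi i)].

Definition Cf d (rho : 'M[C]_d) : R :=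
  convex_roof (fun psi => vN_entropy (dephase (proj psi))) rho.

Definition CfAB m n (rho : 'M[C]_(m * n)) : R :=
  convex_roof (fun psi => vN_entropy (@dephaseA m n (proj psi))) rho.

End QDefs.

From Pilot Require Import Defs.
From HB Require Import structures.
From mathcomp Require Import all_boot all_order all_algebra.
From mathcomp Require Import complex.
From mathcomp Require Import all_classical all_reals all_analysis.
From mathcomp Require Import spectral sesquilinear.
From mathcomp Require Import ring.
Import Order.TTheory GRing.Theory Num.Theory.
Set Implicit Arguments. Unset Strict Implicit. Unset Printing Implicit Defensive.
Local Open Scope ring_scope.

(* Write a unit vector of H_A (x) H_B as psi = sum_i sqrt(q_i) |i> (x) |phi_i>,
   where q is the distribution of the A-outcome and phi_i are the normalised
   conditional states of B.  Dephasing psi in the product basis yields the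
   distribution q_i |phi_i(j)|^2, so by the chain rule of Shannon entropy
   S(Delta psi) = H(q) + sum_i q_i S(Delta phi_i).  Dephasing only A leaves the
   block-diagonal operator sum_i q_i |i><i| (x) |phi_i><phi_i|, of entropy H(q),
   while Tr_A |psi><psi| = sum_i q_i |phi_i><phi_i|.  Hence a pure-state
   decomposition {p_k, psi_k} of rho_AB induces the decomposition
   {p_k q_ki, phi_ki} of rho_B, and its average coherence is the sum of its
   average Delta_A-entropy and the average coherence of the induced ensemble;
   taking the infimum over decompositions of rho_AB gives the inequality. *)

Lemma char_poly_similar (F : comUnitRingType) n (A P : 'M[F]_n) :
  P \in unitmx -> char_poly (invmx P *m A *m P) = char_poly A.
Proof.
move=> Pu; rewrite /char_poly /char_poly_mx !map_mxM.
have PVP : map_mx polyC (invmx P) *m map_mx polyC P = 1%:M :> 'M[{poly F}]_n.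
  by rewrite -map_mxM mulVmx // map_mx1.
have -> : 'X%:M - map_mx polyC (invmx P) *m map_mx polyC A *m map_mx polyC P =
    map_mx polyC (invmx P) *m ('X%:M - map_mx polyC A) *m map_mx polyC P.
  by rewrite mulmxBr mulmxBl mul_mx_scalar -scalemxAl PVP scalemx1.
rewrite !det_mulmx mulrC mulrA -det_mulmx.
by rewrite -map_mxM mulmxV // map_mx1 det1 mul1r.
Qed.

Lemma char_poly_diag (F : comNzRingType) n (v : 'rV[F]_n) :
  char_poly (diag_mx v) = \prod_k ('X - (v 0 k)%:P).
Proof.
rewrite char_poly_trig; last first.
  by apply/is_trig_mxP => i j; rewrite mxE; case: eqP => [->|]; rewrite ?ltnn.
by apply: eq_bigr => k _; rewrite mxE eqxx.
Qed.

Section Entropy.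
Variable R : realType.
Local Notation C := R[i].

Definition entr (x : R) : R := - (x * ln x).

Lemma entr0 : entr 0 = 0.
Proof. by rewrite /entr mul0r oppr0. Qed.

Lemma entr_ge0 x : 0 <= x -> x <= 1 -> 0 <= entr x.
Proof. by move=> x0 x1; rewrite /entr oppr_ge0 mulr_ge0_le0 // ln_le0. Qed.

Lemma entrM q t : 0 <= q -> 0 <= t -> entr (q * t) = t * entr q + q * entr t.
Proof.
rewrite le0r => /orP[/eqP->|q0]; first by rewrite !(mul0r, mulr0, entr0, addr0).
rewrite le0r => /orP[/eqP->|t0]; first by rewrite !(mul0r, mulr0, entr0, add0r).
by rewrite /entr lnM ?posrE //; ring.
Qed.

Lemma sum_entr_ge0 (I : finType) (w : I -> R) :
  (forall i, 0 <= w i) -> \sum_i w i = 1 -> 0 <= \sum_i entr (w i).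
Proof.
move=> w_ge0 w_sum; apply: sumr_ge0 => i _; apply: entr_ge0 => //.
by rewrite -w_sum (bigD1 i) //= lerDl sumr_ge0.
Qed.

Lemma vN_entropy_char_poly d (A : 'M[C]_d) (l : 'I_d -> C) :
  char_poly A = \prod_k ('X - (l k)%:P) ->
  vN_entropy A = \sum_k entr (complex.Re (l k)).
Proof.
move=> chA; rewrite /vN_entropy /spectrum.
set s := xget _ _.
have chAs : char_poly A = \prod_(r <- s) ('X - r%:P).
  apply: (@xgetPex _ [::] [set s | char_poly A = \prod_(r <- s) ('X - r%:P)]).
  by exists [seq l k | k <- enum 'I_d]; rewrite /= big_map big_enum.
have s_perm : perm_eq s [seq l k | k <- enum 'I_d].
  by apply: prod_XsubC_eq; rewrite -chAs big_map big_enum.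
by rewrite (perm_big _ s_perm) big_map big_enum.
Qed.

Lemma vN_entropy_similar d (A P : 'M[C]_d) :
  P \in unitmx -> vN_entropy (invmx P *m A *m P) = vN_entropy A.
Proof. by move=> Pu; rewrite /vN_entropy /spectrum char_poly_similar. Qed.

Lemma vN_entropy_diag d (v : 'rV[C]_d) :
  vN_entropy (diag_mx v) = \sum_k entr (complex.Re (v 0 k)).
Proof. exact/vN_entropy_char_poly/char_poly_diag. Qed.

End Entropy.

Section SquaredModulus.
Variable R : realType.
Local Notation C := R[i].
Local Open Scope complex_scope.

Definition sqmodc (z : C) : R := complex.Re z ^+ 2 + complex.Im z ^+ 2.

Lemma mulcJ_sqmodc z : z * conjc z = (sqmodc z)%:C.
Proof.
case: z => a b; apply/eqP; rewrite eq_complex /sqmodc /=.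
by apply/andP; split; apply/eqP; ring.
Qed.

Lemma conjcZ (r : R) z : conjc (r%:C * z) = r%:C * conjc z.
Proof.
case: z => a b; apply/eqP; rewrite eq_complex /=.
by apply/andP; split; apply/eqP; ring.
Qed.

Lemma sqmodc0 : sqmodc 0 = 0.
Proof. by rewrite /sqmodc /= expr2 mul0r addr0. Qed.

Lemma sqmodc1 : sqmodc 1 = 1.
Proof. by rewrite /sqmodc /= expr1n expr2 mul0r addr0. Qed.

Lemma sqmodc_ge0 z : 0 <= sqmodc z.
Proof. by rewrite addr_ge0 // sqr_ge0. Qed.

Lemma sqmodc_eq0 z : sqmodc z = 0 -> z = 0.
Proof.
case: z => a b; rewrite /sqmodc /= => /eqP; rewrite paddr_eq0 ?sqr_ge0 // !sqrf_eq0.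
by case/andP => /eqP-> /eqP->.
Qed.

Lemma sqmodcZ (r : R) z : sqmodc (r%:C * z) = r ^+ 2 * sqmodc z.
Proof. by case: z => a b; rewrite /sqmodc /=; ring. Qed.

End SquaredModulus.

Section Adjoint.
Variable R : realType.
Local Notation C := R[i].
Local Open Scope complex_scope.
Local Open Scope sesquilinear_scope.

Lemma adjmxE m n (A : 'M[C]_(m, n)) : adjmx A = A ^t*.
Proof. by rewrite /adjmx map_trmx. Qed.

Lemma adjmx_entry m n (A : 'M[C]_(m, n)) i j : adjmx A i j = conjc (A j i).
Proof. by rewrite !mxE. Qed.

Lemma adjmxM m n p (A : 'M[C]_(m, n)) (B : 'M[C]_(n, p)) :
  adjmx (A *m B) = adjmx B *m adjmx A.
Proof. by rewrite /adjmx map_mxM trmx_mul. Qed.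

Lemma adjmxK m n (A : 'M[C]_(m, n)) : adjmx (adjmx A) = A.
Proof. by apply/matrixP => i j; rewrite !mxE conjcK. Qed.

Lemma adjmx_delta m n (i : 'I_m) (j : 'I_n) :
  adjmx (delta_mx i j : 'M[C]_(m, n)) = delta_mx j i.
Proof. by apply/matrixP => a b; rewrite !mxE andbC; case: andP; rewrite ?conjc1 ?conjc0. Qed.

End Adjoint.

Section Projectors.
Variable R : realType.
Local Notation C := R[i].
Local Open Scope complex_scope.

Lemma proj_entry d (psi : 'cV[C]_d) k l : Defs.proj psi k l = psi k 0 * conjc (psi l 0).
Proof. by rewrite /Defs.proj mxE big_ord1 !mxE. Qed.

Lemma mulmx_proj d (W : 'M[C]_d) (v : 'cV[C]_d) :
  W *m Defs.proj v *m adjmx W = Defs.proj (W *m v).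
Proof. by rewrite /Defs.proj adjmxM !mulmxA. Qed.

Lemma sum_sqmodc_unit d (psi : 'cV[C]_d) :
  adjmx psi *m psi = 1%:M -> \sum_k sqmodc (psi k 0) = 1.
Proof.
move=> /matrixP /(_ 0 0); rewrite !mxE eqxx mulr1n => psi_unit.
suff : (\sum_k sqmodc (psi k 0))%:C = 1 :> C by case.
rewrite rmorph_sum -psi_unit; apply: eq_bigr => k _.
by rewrite !mxE mulrC mulcJ_sqmodc.
Qed.

Lemma vN_entropy_dephase_proj d (psi : 'cV[C]_d) :
  vN_entropy (dephase (Defs.proj psi)) = \sum_k entr (sqmodc (psi k 0)).
Proof.
rewrite vN_entropy_diag; apply: eq_bigr => k _.
by rewrite mxE proj_entry mulcJ_sqmodc.
Qed.

Lemma vN_entropy_dephase_proj_ge0 d (psi : 'cV[C]_d) :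
  adjmx psi *m psi = 1%:M -> 0 <= vN_entropy (dephase (Defs.proj psi)).
Proof.
move=> /sum_sqmodc_unit psi_unit; rewrite vN_entropy_dephase_proj.
by apply: sum_entr_ge0 => // k; apply: sqmodc_ge0.
Qed.

End Projectors.

Section UnitaryCompletion.
Local Open Scope sesquilinear_scope.
Variable C : numClosedFieldType.

Lemma unitary_completion n (u : 'rV[C]_n.+1) : u *m u ^t* = 1%:M ->
  exists2 U : 'M[C]_n.+1, U *m U ^t* = 1%:M & row 0 U = u.
Proof.
move=> u_unit.
pose A : 'M[C]_n.+1 := \matrix_(r, c) if r == 0 then u 0 c else 0.
pose S := schmidt A.
have S_unitary : S \is unitarymx by apply: schmidt_unitarymx.
have row0A : row 0 A = u by apply/rowP => j; rewrite !mxE eqxx.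
have := row_schmidt_sub A 0.
rewrite (big_pred1 0); last by move=> k; rewrite /= leqn0.
rewrite genmxE row0A => /sub_rVP [c u_def].
have S0_unit : row 0 S *m (row 0 S) ^t* = 1%:M.
  apply/matrixP => i j; rewrite !ord1.
  by have := row_unitarymxP S_unitary 0 0; rewrite dotmxE eqxx => ->; rewrite mxE.
have c_ge0 : 0 <= c.
  have := form1_row_schmidt A 0; rewrite dotmxE -/S row0A u_def -scalemxAl S0_unit.
  by rewrite !mxE eqxx mulr1n mulr1.
have /eqP : c * c = 1.
  have := congr1 (fun M : 'M[C]_1 => M 0 0) u_unit; rewrite /= u_def.
  have -> : (c *: row 0 S) ^t* = c^* *: (row 0 S) ^t*.
    by apply/matrixP => i j; rewrite !mxE rmorphM.
  rewrite -scalemxAr -scalemxAl S0_unit !mxE eqxx mulr1n mulr1.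
  by rewrite geC0_conj.
rewrite -expr2 sqrf_eq1 => /orP[/eqP c1|/eqP cN1].
  by exists S; [apply/unitarymxP | rewrite u_def c1 scale1r].
by move: c_ge0; rewrite cN1 oppr_ge0 ler10.
Qed.

Lemma unitary_to_delta n (v : 'cV[C]_n.+1) : v ^t* *m v = 1%:M ->
  exists2 U : 'M[C]_n.+1, U *m U ^t* = 1%:M & U *m v = delta_mx 0 0.
Proof.
move=> v_unit; have [|U UUV row0U] := @unitary_completion n (v ^t*).
  by rewrite trmxCK.
exists U => //; rewrite -[v]trmxCK -row0U; apply/colP => j.
rewrite [RHS]mxE eqxx andbT; have := congr1 (fun M : 'M[C]_n.+1 => M j 0) UUV.
by rewrite !mxE => <-; apply: eq_bigr => k _; rewrite !mxE.
Qed.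

End UnitaryCompletion.

Section ConvexRoof.
Variable R : realType.
Local Notation C := R[i].
Local Open Scope classical_set_scope.

Lemma convex_roof_le d (f : 'cV[C]_d -> R) (rho : 'M[C]_d) k (p : 'I_k -> R) psi :
  (forall v : 'cV[C]_d, adjmx v *m v = 1%:M -> 0 <= f v) ->
  pure_decomp rho p psi -> convex_roof f rho <= \sum_i p i * f (psi i).
Proof.
move=> f_ge0 rho_decomp; apply: ge_inf; last by exists k, p, psi.
exists 0 => _ [k' [p' [psi' [[p'_ge0 _ psi'_unit _] ->]]]].
by apply: sumr_ge0 => i _; rewrite mulr_ge0 ?f_ge0.
Qed.

Lemma convex_roof_ge d (f : 'cV[C]_d -> R) (rho : 'M[C]_d) (c : R) :
  (exists k (p : 'I_k -> R) psi, pure_decomp rho p psi) ->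
  (forall k (p : 'I_k -> R) psi,
     pure_decomp rho p psi -> c <= \sum_i p i * f (psi i)) ->
  c <= convex_roof f rho.
Proof.
move=> [k [p [psi rho_decomp]]] c_le; apply: lb_le_inf.
  by exists (\sum_i p i * f (psi i)), k, p, psi.
by move=> _ [k' [p' [psi' [rho_decomp' ->]]]]; apply: c_le.
Qed.

End ConvexRoof.

Section States.
Variable R : realType.
Local Notation C := R[i].
Local Open Scope complex_scope.

Lemma state_dim_gt0 d (rho : 'M[C]_d) : is_state rho -> (0 < d)%N.
Proof.
case: d rho => // rho [_ _]; rewrite /mxtrace big_ord0 => /eqP.
by rewrite eq_sym oner_eq0.
Qed.

(* The spectral decomposition rho = P^* diag(lambda) P: the rows of P are the
   eigenvectors, and positivity and unit trace make lambda a distribution. *)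
Lemma state_pure_decomp d (rho : 'M[C]_d) : is_state rho ->
  exists k (p : 'I_k -> R) psi, pure_decomp rho p psi.
Proof.
move=> [rho_herm rho_psd rho_tr].
have rho_normal : rho \is normalmx by apply/normalmxP; rewrite -adjmxE rho_herm.
set P := spectralmx rho; set lambda := spectral_diag rho.
have rho_def : rho = invmx P *m diag_mx lambda *m P by apply/orthomx_spectralP.
have P_unitary : P \is unitarymx by apply: spectral_unitarymx.
have P_unit : P \in unitmx by apply: unitarymx_unit.
have PV : invmx P = adjmx P by rewrite adjmxE; apply: invmx_unitary.
have PPV : P *m adjmx P = 1%:M by rewrite adjmxE; apply/unitarymxP.
pose u k : 'cV[C]_d := adjmx P *m delta_mx k 0.
have uV k : adjmx (u k) = delta_mx 0 k *m P by rewrite adjmxM adjmx_delta adjmxK.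
have Pu k : P *m u k = delta_mx k 0 by rewrite mulmxA PPV mul1mx.
have rho_u k : adjmx (u k) *m rho *m u k = (lambda 0 k)%:M.
  rewrite uV rho_def PV !mulmxA -[delta_mx 0 k *m P *m adjmx P]mulmxA PPV mulmx1.
  rewrite -[_ *m P *m adjmx P]mulmxA PPV mulmx1 -rowE row_diag_mx -scalemxAl mul_delta_mx.
  by apply/matrixP => i j; rewrite !ord1 !mxE eqxx mulr1 mulr1n.
have lambda_ge0 k : lambda 0 k = (complex.Re (lambda 0 k))%:C /\ 0 <= complex.Re (lambda 0 k).
  have := rho_psd (u k); rewrite rho_u mxE eqxx mulr1n.
  by case: (lambda 0 k) => a b; rewrite lecE /= => /andP[/eqP-> ->].
exists d, (fun k => complex.Re (lambda 0 k)), u; split.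
- by move=> k; case: (lambda_ge0 k).
- have : \sum_k (complex.Re (lambda 0 k))%:C = 1 :> C.
    rewrite -rho_tr rho_def mxtrace_mulC mulmxA mulmxV // mul1mx mxtrace_diag.
    by apply: eq_bigr => k _; rewrite -(lambda_ge0 k).1.
  by rewrite -rmorph_sum => -[].
- by move=> k; rewrite uV -mulmxA Pu mul_delta_mx [LHS]mx11_scalar mxE !eqxx.
- rewrite {1}rho_def PV diag_mx_sum_delta mulmx_sumr mulmx_suml; apply: eq_bigr => k _.
  rewrite -(lambda_ge0 k).1 /Defs.proj uV -scalemxAr -scalemxAl; congr (_ *: _).
  by rewrite !mulmxA -[_ *m delta_mx k 0 *m delta_mx 0 k]mulmxA mul_delta_mx.
Qed.

End States.

Section ProductIndex.
Variables m n : nat.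

Lemma idx_pairK (i : 'I_m) (j : 'I_n) : idx_pair (mxvec_index i j) = (i, j).
Proof. by rewrite /idx_pair /mxvec_index cast_ordK enum_rankK. Qed.

Lemma eq_mxvec_index (i i' : 'I_m) (j j' : 'I_n) :
  (mxvec_index i j == mxvec_index i' j') = (i == i') && (j == j').
Proof.
apply/eqP/andP => [ij_eq|[/eqP-> /eqP->] //].
by have := congr1 (@idx_pair m n) ij_eq; rewrite !idx_pairK => -[-> ->].
Qed.

Lemma sum_mxvec_index (V : nmodType) (F : 'I_(m * n) -> V) :
  \sum_k F k = \sum_i \sum_j F (mxvec_index i j).
Proof.
rewrite pair_big (reindex (fun ij : 'I_m * 'I_n => mxvec_index ij.1 ij.2)) /=.
  by apply: eq_bigr => -[i j].
exists (@idx_pair m n) => [[i j] _|k _]; first by rewrite idx_pairK.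
by case/mxvec_indexP: k => i j; rewrite idx_pairK.
Qed.

End ProductIndex.

Section Bipartite.
Variable R : realType.
Local Notation C := R[i].
Variables m n : nat.
Local Notation d := (m * n)%N.

Lemma ptraceA_lincomb k (c : 'I_k -> C) (M : 'I_k -> 'M[C]_d) :
  ptraceA (\sum_l c l *: M l) = \sum_l c l *: ptraceA (M l).
Proof.
apply/matrixP => j j'; rewrite !mxE summxE.
under eq_bigr => i _ do rewrite summxE.
rewrite exchange_big /=; apply: eq_bigr => l _.
by rewrite !mxE mulr_sumr; apply: eq_bigr => i _; rewrite !mxE.
Qed.

(* blockv i x is the product vector |i> (x) x *)
Definition blockv (i : 'I_m) (x : 'cV[C]_n) : 'cV[C]_d :=
  \col_l (if (idx_pair l).1 == i then x (idx_pair l).2 0 else 0).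

Lemma blockv_entry i x i' j : blockv i x (mxvec_index i' j) 0 = if i' == i then x j 0 else 0.
Proof. by rewrite mxE idx_pairK. Qed.

Definition blockdiag (U : 'I_m -> 'M[C]_n) : 'M[C]_d :=
  \matrix_(k, l) if (idx_pair k).1 == (idx_pair l).1
                 then U (idx_pair k).1 (idx_pair k).2 (idx_pair l).2 else 0.

Lemma blockdiag_entry U i j i' j' :
  blockdiag U (mxvec_index i j) (mxvec_index i' j') = if i == i' then U i j j' else 0.
Proof. by rewrite mxE !idx_pairK. Qed.

Lemma blockdiag_blockv U i x : blockdiag U *m blockv i x = blockv i (U i *m x).
Proof.
apply/colP => k; rewrite mxE sum_mxvec_index.
case/mxvec_indexP: k => i' j'; rewrite blockv_entry (bigD1 i') //=.
rewrite [X in _ + X]big1 => [|i0 /negbTE neq_i0].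
  under eq_bigr => j _ do rewrite blockdiag_entry eqxx blockv_entry.
  by case: eqP => [->|_]; rewrite ?mxE ?addr0 // big1 // => j _; rewrite mulr0.
by apply: big1 => j _; rewrite blockdiag_entry eq_sym neq_i0 mul0r.
Qed.

Lemma blockdiag_unitary U : (forall i, U i *m adjmx (U i) = 1%:M) ->
  blockdiag U *m adjmx (blockdiag U) = 1%:M.
Proof.
move=> U_unitary; apply/matrixP => k l; rewrite mxE sum_mxvec_index.
case/mxvec_indexP: k => i j; case/mxvec_indexP: l => i' j'.
rewrite mxE eq_mxvec_index (bigD1 i) //= [X in _ + X]big1 => [|i0 /negbTE neq_i0]; last first.
  by apply: big1 => j0 _; rewrite adjmx_entry !blockdiag_entry eq_sym neq_i0 mul0r.
rewrite addr0; under eq_bigr => j0 _ do rewrite adjmx_entry !blockdiag_entry eqxx.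
case: (eqVneq i' i) => [->|neq_i'] /=; last by rewrite big1 // => j0 _; rewrite oppr0 mulr0.
have := congr1 (fun M : 'M[C]_n => M j j') (U_unitary i).
by rewrite !mxE => <-; apply: eq_bigr => j0 _; rewrite !mxE.
Qed.

End Bipartite.

Section PureBipartite.
Variable R : realType.
Local Notation C := R[i].
Local Open Scope complex_scope.
Variables m n : nat.
Local Notation d := (m * n.+1)%N.
Local Notation e0 := (delta_mx 0 0 : 'cV[C]_n.+1).
Implicit Types psi : 'cV[C]_d.

Definition sliceA psi (i : 'I_m) : 'cV[C]_n.+1 := \col_j psi (mxvec_index i j) 0.

Definition probA psi (i : 'I_m) : R := \sum_j sqmodc (psi (mxvec_index i j) 0).

(* When probA psi i = 0 the conditional state is irrelevant; e0 is a dummy. *)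
Definition condB psi i : 'cV[C]_n.+1 :=
  if 0 < probA psi i then ((Num.sqrt (probA psi i))^-1)%:C *: sliceA psi i else e0.

Lemma probA_ge0 psi i : 0 <= probA psi i.
Proof. by apply: sumr_ge0 => j _; apply: sqmodc_ge0. Qed.

Lemma sum_probA psi : adjmx psi *m psi = 1%:M -> \sum_i probA psi i = 1.
Proof. by move=> /sum_sqmodc_unit; rewrite sum_mxvec_index. Qed.

Lemma sliceA_condB psi i : sliceA psi i = (Num.sqrt (probA psi i))%:C *: condB psi i.
Proof.
rewrite /condB; case: ifPn => [q_gt0|].
  by rewrite scalerA -rmorphM divff ?scale1r // gt_eqF ?sqrtr_gt0.
rewrite -leNgt => q_le0; have q0 : probA psi i = 0 by apply/le_anti; rewrite q_le0 probA_ge0.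
rewrite q0 sqrtr0 scale0r; apply/colP => j; rewrite !mxE; apply: sqmodc_eq0.
move/eqP: q0; rewrite psumr_eq0 => [|k _]; last exact: sqmodc_ge0.
by move=> /allP/(_ j (mem_index_enum _))/eqP.
Qed.

Lemma sqmodc_condB psi i j :
  sqmodc (psi (mxvec_index i j) 0) = probA psi i * sqmodc (condB psi i j 0).
Proof.
have := congr1 (fun v : 'cV[C]_n.+1 => v j 0) (sliceA_condB psi i).
by rewrite /= !mxE => ->; rewrite sqmodcZ sqr_sqrtr ?probA_ge0.
Qed.

Lemma condB_unit psi i : adjmx (condB psi i) *m condB psi i = 1%:M.
Proof.
apply/matrixP => a b; rewrite !ord1 !mxE /=.
under eq_bigr => j _ do rewrite !mxE mulrC mulcJ_sqmodc.
rewrite -rmorph_sum /condB; case: ifP => [q_gt0|_].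
  under eq_bigr => j _ do rewrite mxE sqmodcZ mxE.
  by rewrite -mulr_sumr exprVn sqr_sqrtr ?probA_ge0 // mulVf ?gt_eqF.
rewrite (bigD1 0) //= big1 => [|j /negbTE j_neq0]; last by rewrite mxE j_neq0 sqmodc0.
by rewrite mxE eqxx sqmodc1 addr0.
Qed.

Lemma vN_entropy_dephase_proj_chain psi :
  vN_entropy (dephase (Defs.proj psi)) =
  \sum_i entr (probA psi i) + \sum_i probA psi i * vN_entropy (dephase (Defs.proj (condB psi i))).
Proof.
rewrite vN_entropy_dephase_proj sum_mxvec_index -big_split /=; apply: eq_bigr => i _.
rewrite vN_entropy_dephase_proj mulr_sumr.
rewrite (eq_bigr (fun j => sqmodc (condB psi i j 0) * entr (probA psi i) +
                          probA psi i * entr (sqmodc (condB psi i j 0)))); last first.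
  by move=> j _; rewrite sqmodc_condB entrM ?probA_ge0 ?sqmodc_ge0.
by rewrite big_split /= -mulr_suml sum_sqmodc_unit ?condB_unit // mul1r.
Qed.

Lemma ptraceA_proj psi :
  ptraceA (Defs.proj psi) = \sum_i (probA psi i)%:C *: Defs.proj (condB psi i).
Proof.
apply/matrixP => j j'; rewrite !mxE summxE; apply: eq_bigr => i _.
rewrite proj_entry mxE proj_entry.
have slice_entry k := congr1 (fun v : 'cV[C]_n.+1 => v k 0) (sliceA_condB psi i).
move: (slice_entry j) (slice_entry j'); rewrite /= !mxE => -> ->.
by rewrite conjcZ mulrACA -rmorphM -expr2 sqr_sqrtr ?probA_ge0.
Qed.

Lemma dephaseA_proj psi :
  dephaseA (Defs.proj psi) = \sum_i Defs.proj (blockv i (sliceA psi i)).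
Proof.
apply/matrixP => k l; rewrite summxE mxE.
case/mxvec_indexP: k => i j; case/mxvec_indexP: l => i' j'.
rewrite !idx_pairK /= (bigD1 i) //= [X in _ + X]big1 => [|i0 /negbTE neq_i0]; last first.
  by rewrite proj_entry blockv_entry eq_sym neq_i0 mul0r.
rewrite addr0 [RHS]proj_entry !blockv_entry eqxx.
by case: eqVneq => [<-|_]; rewrite ?proj_entry ?mxE // conjc0 mulr0.
Qed.

Lemma sum_proj_blockv_delta (c : 'I_m -> R) :
  \sum_i Defs.proj (blockv i ((c i)%:C *: e0)) =
  diag_mx (\row_l (if (idx_pair l).2 == 0 then ((c (idx_pair l).1) ^+ 2)%:C else 0)).
Proof.
apply/matrixP => k l; rewrite summxE.
case/mxvec_indexP: k => i j; case/mxvec_indexP: l => i' j'.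
rewrite [RHS]mxE mxE idx_pairK /= eq_mxvec_index.
rewrite (bigD1 i) //= [X in _ + X]big1 => [|i0 /negbTE neq_i0]; last first.
  by rewrite proj_entry blockv_entry eq_sym neq_i0 mul0r.
rewrite addr0 proj_entry !blockv_entry eqxx !mxE.
case: (eqVneq i' i) => [_|_] /=; last by rewrite oppr0 mulr0.
rewrite eqxx !andbT; case: (eqVneq j 0) => [->|_]; last by rewrite mulr0n mulr0 mul0r mul0rn.
case: (eqVneq j' 0) => [_|_]; last by rewrite !mulr0n !mulr0 conjc0 mulr0.
by rewrite !mulr1n !mulr1 conjc_real -rmorphM expr2.
Qed.

(* Conjugating by the block unitary sum_i |i><i| (x) U_i, with U_i phi_i = e0,
   diagonalises Delta_A |psi><psi| = sum_i |i><i| (x) |sqrt(q_i) phi_i><sqrt(q_i) phi_i|. *)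
Lemma vN_entropy_dephaseA_proj psi :
  vN_entropy (dephaseA (Defs.proj psi)) = \sum_i entr (probA psi i).
Proof.
have U_ex i : exists2 Ui : 'M[C]_n.+1, Ui *m adjmx Ui = 1%:M & Ui *m condB psi i = e0.
  have [|Ui] := @unitary_to_delta _ n (condB psi i); first by rewrite -adjmxE condB_unit.
  by rewrite -adjmxE; exists Ui.
have [U U_unitary U_condB] := fin_all_exists2 U_ex.
set W := blockdiag U.
have WWV : W *m adjmx W = 1%:M := blockdiag_unitary U_unitary.
have W_unit : W \in unitmx by case/mulmx1_unit: WWV.
have WV : invmx W = adjmx W by rewrite -[invmx W]mulmx1 -WWV mulmxA mulVmx // mul1mx.
pose D : 'rV[C]_d := \row_l (if (idx_pair l).2 == 0 then (probA psi (idx_pair l).1)%:C else 0).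
have dephaseA_def : dephaseA (Defs.proj psi) = invmx W *m diag_mx D *m W.
  suff <- : W *m dephaseA (Defs.proj psi) *m adjmx W = diag_mx D.
    by rewrite -WV !mulmxA mulVmx // mul1mx -mulmxA mulVmx // mulmx1.
  rewrite dephaseA_proj mulmx_sumr mulmx_suml.
  under eq_bigr => i _ do rewrite mulmx_proj blockdiag_blockv sliceA_condB -scalemxAr U_condB.
  rewrite sum_proj_blockv_delta; congr diag_mx; apply/rowP => l.
  by rewrite !mxE sqr_sqrtr ?probA_ge0.
rewrite dephaseA_def vN_entropy_similar // vN_entropy_diag sum_mxvec_index.
apply: eq_bigr => i _; rewrite big_ord_recl big1 => [|j _]; rewrite mxE idx_pairK //=.
  by rewrite addr0.
by rewrite entr0.
Qed.

Lemma vN_entropy_dephaseA_proj_ge0 psi : adjmx psi *m psi = 1%:M ->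
  0 <= vN_entropy (dephaseA (Defs.proj psi)).
Proof.
move=> /sum_probA probA_sum; rewrite vN_entropy_dephaseA_proj.
by apply: sum_entr_ge0 => // i; apply: probA_ge0.
Qed.

End PureBipartite.

Section InducedDecomposition.
Variable R : realType.
Local Notation C := R[i].
Variables m n : nat.
Local Notation d := (m * n.+1)%N.

Lemma ptraceA_pure_decomp (rho : 'M[C]_d) k (p : 'I_k -> R) psi :
  pure_decomp rho p psi ->
  pure_decomp (ptraceA rho)
    (fun l : 'I_(k * m) => p (idx_pair l).1 * probA (psi (idx_pair l).1) (idx_pair l).2)
    (fun l : 'I_(k * m) => condB (psi (idx_pair l).1) (idx_pair l).2).
Proof.
move=> [p_ge0 p_sum psi_unit ->]; split.
- by move=> l; rewrite mulr_ge0 ?probA_ge0.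
- rewrite sum_mxvec_index -{}p_sum; apply: eq_bigr => i _.
  under eq_bigr => j _ do rewrite idx_pairK.
  by rewrite /= -mulr_sumr sum_probA ?mulr1.
- by move=> l; apply: condB_unit.
- rewrite ptraceA_lincomb sum_mxvec_index; apply: eq_bigr => i _.
  rewrite ptraceA_proj scaler_sumr; apply: eq_bigr => j _.
  by rewrite idx_pairK scalerA -rmorphM.
Qed.

Lemma CfAB_add_Cf_ptraceA_le (rho : 'M[C]_d) k (p : 'I_k -> R) psi :
  pure_decomp rho p psi ->
  @CfAB R m n.+1 rho + Cf (@ptraceA R m n.+1 rho) <=
  \sum_i p i * vN_entropy (dephase (Defs.proj (psi i))).
Proof.
move=> rho_decomp.
have CfAB_le := convex_roof_le (@vN_entropy_dephaseA_proj_ge0 R m n) rho_decomp.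
have Cf_le := convex_roof_le (@vN_entropy_dephase_proj_ge0 R n.+1)
                             (ptraceA_pure_decomp rho_decomp).
apply: le_trans (lerD CfAB_le Cf_le) _; rewrite sum_mxvec_index -big_split /=.
apply/ler_sum => i _; rewrite vN_entropy_dephase_proj_chain mulrDr.
rewrite vN_entropy_dephaseA_proj mulr_sumr lerD2l.
by apply: ler_sum => j _; rewrite idx_pairK mulrA.
Qed.

End InducedDecomposition.

Theorem lemma3 (R : realType) (m n : nat) (rho : 'M[R[i]]_(m * n)) :
  is_state rho -> @CfAB R m n rho + Cf (@ptraceA R m n rho) <= Cf rho.
Proof.
case: n rho => [|n] rho rho_state.
  by exfalso; move: (state_dim_gt0 rho_state); rewrite muln0.
apply: convex_roof_ge; first exact: state_pure_decomp.
by move=> k p psi; apply: CfAB_add_Cf_ptraceA_le.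
Qed.
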